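(* For every integer $j\ge 0$, $$\sum_{n=1}^{\infty}\frac{\binom{2n}{n}}{n\,4^n}\,\zeta_n^{\star}(\{2\}_j)=2\,\eta(2j+1).$$
   Context: For integers $n\ge1$ and $j\ge0$, the multiple harmonic star sum of depth $j$ and weight $2j$ is $\zeta_n^{\star}(\{2\}_j)=\sum_{n\ge k_1\ge\dots\ge k_j\ge1}\prod_{i=1}^j\frac{1}{k_i^2}$, with $\zeta_n^{\star}(\{2\}_0)=1$. $\eta$ denotes the Dirichlet eta function, $\eta(s)=\sum_{n=1}^\infty\frac{(-1)^{n-1}}{n^s}$, with $\eta(1)=\ln 2$. *)

From Stdlib Require Import Reals.
From Coquelicot Require Import Coquelicot.
Open Scope R_scope.

(* Multiple harmonic star sum zeta_n^star({2}_j):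
   sum over n >= k_1 >= ... >= k_j >= 1 of prod 1/k_i^2.
   Recursively: zeta_n^star({2}_0) = 1 and
   zeta_n^star({2}_(j+1)) = sum_{k=1}^n (1/k^2) zeta_k^star({2}_j). *)
Fixpoint zeta_star2 (j : nat) (n : nat) : R :=
  match j with
  | O => 1
  | S j' => sum_n_m (fun k => / (INR k ^ 2) * zeta_star2 j' k) 1 n
  end.

(* Dirichlet eta function at a positive integer s:
   eta(s) = sum_{n>=1} (-1)^(n-1) / n^s  (series indexed from m = n-1 = 0). *)
Definition eta (s : nat) : R :=
  Series (fun m : nat => (-1) ^ m / (INR (m + 1)) ^ s).

Definition central_binom (n : nat) : R := Binomial.C (2 * n) n.

From Stdlib Require Import Reals Lra Lia.
From Coquelicot Require Import Coquelicot.
Open Scope R_scope.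

(* Let r_n(k) = C(2n, n-k) / C(2n, n).  Since (n^2 - k^2) r_n(k) = n^2 r_(n-1)(k),
   induction on j gives zeta_n^*({2}_j) = 2 sum_(k=1..n) (-1)^(k-1) r_n(k) / k^(2j).
   Inserting this into the N-th partial sum and exchanging the sums, the coefficient
   of 2 (-1)^(k-1) / k^(2j) is sum_(n<=N) C(2n, n-k) / (n 4^n) = 1/k - d_N(k), where
   k d_N(k) = sum_(i<k) (p_N(i) + p_N(i+1)) with p_N(i) = C(2N, N-i) / 4^N the
   random-walk probabilities.  As p_N decreases in i, d_N(k) / k^(2j) is nonnegative
   and decreasing in k, so the alternating error term lies between 0 and
   d_N(1) <= 2 p_N(0) = O(1/sqrt N). *)

Lemma sum_n_m_plus_R (u v : nat -> R) n m :
  @eq R (sum_n_m (fun k => u k + v k) n m) (sum_n_m u n m + sum_n_m v n m).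
Proof. apply (sum_n_m_plus (G:=R_AbelianMonoid)). Qed.

Lemma sum_n_m_scal_R (c : R) (u : nat -> R) n m :
  @eq R (sum_n_m (fun k => c * u k) n m) (c * sum_n_m u n m).
Proof. apply (sum_n_m_mult_l (K:=R_Ring)). Qed.

Lemma sum_n_m_ext_R (u v : nat -> R) n m :
  (forall k, (n <= k <= m)%nat -> u k = v k) -> @eq R (sum_n_m u n m) (sum_n_m v n m).
Proof. apply sum_n_m_ext_loc. Qed.

Lemma sum_n_Sm_R (u : nat -> R) n m : (n <= S m)%nat ->
  @eq R (sum_n_m u n (S m)) (sum_n_m u n m + u (S m)).
Proof. apply (sum_n_Sm (G:=R_AbelianMonoid)). Qed.

Lemma sum_Sn_m_R (u : nat -> R) n m : (n <= m)%nat ->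
  @eq R (sum_n_m u n m) (u n + sum_n_m u (S n) m).
Proof. apply (sum_Sn_m (G:=R_AbelianMonoid)). Qed.

Lemma sum_n_m_S_R (u : nat -> R) n m :
  @eq R (sum_n_m (fun i => u (S i)) n m) (sum_n_m u (S n) (S m)).
Proof. apply (sum_n_m_S (G:=R_AbelianMonoid)). Qed.

Lemma sum_n_m_empty_R (u : nat -> R) n m : (m < n)%nat -> @eq R (sum_n_m u n m) 0.
Proof. apply (sum_n_m_zero (G:=R_AbelianMonoid)). Qed.

Lemma sum_n_m_zero_R (u : nat -> R) n m :
  (forall k, (n <= k <= m)%nat -> u k = 0) -> @eq R (sum_n_m u n m) 0.
Proof.
  intro H. rewrite (sum_n_m_ext_R u (fun _ => zero)) by exact H.
  apply (sum_n_m_const_zero (G:=R_AbelianMonoid)).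
Qed.

Lemma sum_n_m_minus_R (u v : nat -> R) n m :
  @eq R (sum_n_m (fun k => u k - v k) n m) (sum_n_m u n m - sum_n_m v n m).
Proof.
  unfold Rminus. rewrite sum_n_m_plus_R.
  rewrite (sum_n_m_ext_R (fun k => - v k) (fun k => (-1) * v k)) by (intros; ring).
  rewrite sum_n_m_scal_R. match goal with |- ?x = ?y => change (@eq R x y) end. ring.
Qed.

Lemma sum_n_m_nonneg_R (u : nat -> R) n m :
  (forall k, 0 <= u k) -> 0 <= sum_n_m u n m.
Proof.
  intro Hu. destruct (Nat.le_gt_cases n m) as [Hnm | Hnm].
  - induction m as [|m IH].
    + replace n with 0%nat by lia. rewrite sum_n_n. apply Hu.
    + destruct (Nat.eq_dec n (S m)) as [-> | Hne].
      * rewrite sum_n_n. apply Hu.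
      * rewrite sum_n_Sm_R by lia. specialize (IH ltac:(lia)). specialize (Hu (S m)). lra.
  - rewrite sum_n_m_empty_R by lia. lra.
Qed.

Lemma sum_n_m_decr_ge_last (u : nat -> R) : (forall k, u (S k) <= u k) ->
  forall p, INR (S p) * u p <= sum_n_m u 0 p.
Proof.
  intros Hu p. induction p as [|p IH].
  - rewrite sum_n_n. simpl. lra.
  - rewrite sum_n_Sm_R, (S_INR (S p)) by lia. specialize (Hu p).
    assert (0 <= INR (S p)) by apply pos_INR. nra.
Qed.

Lemma alternating_sum_bounds L (v : nat -> R) :
  (forall i, 0 <= v i) -> (forall i, v (S i) <= v i) ->
  0 <= sum_n_m (fun i => (-1) ^ i * v i) 0 L <= v 0%nat.
Proof.
  revert v. induction L as [|L IH]; intros v Hv Hdecr.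
  - rewrite sum_n_n. simpl. specialize (Hv 0%nat). lra.
  - rewrite sum_Sn_m_R, <- sum_n_m_S_R by lia.
    rewrite (sum_n_m_ext_R _ (fun i => (-1) * ((-1) ^ i * v (S i))))
      by (intros; simpl; ring).
    rewrite sum_n_m_scal_R.
    specialize (IH (fun i => v (S i)) (fun i => Hv (S i)) (fun i => Hdecr (S i))).
    specialize (Hdecr 0%nat). simpl in *. lra.
Qed.

Lemma is_lim_seq_inv_INR_S : is_lim_seq (fun i => / INR (S i)) 0.
Proof.
  assert (H := is_lim_seq_INR). apply is_lim_seq_incr_1 in H.
  apply is_lim_seq_inv in H; [exact H | discriminate].
Qed.

Lemma inv_pow_INR_S_decr k i : / INR (S (S i)) ^ k <= / INR (S i) ^ k.
Proof.
  assert (0 < INR (S i)) by (apply lt_0_INR; lia).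
  apply Rinv_le_contravar; [apply pow_lt; lra |].
  apply pow_incr. split; [lra | apply le_INR; lia].
Qed.

Lemma is_series_eta s : (1 <= s)%nat ->
  is_series (fun m => (-1) ^ m / INR (m + 1) ^ s) (eta s).
Proof.
  intro Hs.
  set (u := fun i => / INR (i + 1) ^ s).
  assert (Hu_bounds : forall i, 0 <= u i <= / INR (S i)).
  { intro i. unfold u. rewrite Nat.add_1_r.
    assert (1 <= INR (S i)) by (apply (le_INR 1); lia).
    split; [apply Rlt_le, Rinv_0_lt_compat, pow_lt; lra |].
    apply Rinv_le_contravar; [lra |].
    rewrite <- (pow_1 (INR (S i))) at 1. apply Rle_pow; [lra | exact Hs]. }
  assert (Hu_decr : Un_decreasing u).
  { intro i. unfold u. rewrite !Nat.add_1_r. apply inv_pow_INR_S_decr. }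
  assert (Hu_lim : Un_cv u 0).
  { apply is_lim_seq_Reals, (is_lim_seq_le_le (fun _ => 0) u (fun n => / INR (S n))).
    - exact Hu_bounds.
    - apply is_lim_seq_const.
    - apply is_lim_seq_inv_INR_S. }
  destruct (alternated_series u Hu_decr Hu_lim) as [l Hl].
  assert (Hseries : is_series (fun m => (-1) ^ m / INR (m + 1) ^ s) l).
  { apply is_lim_seq_Reals. intros eps Heps. destruct (Hl eps Heps) as [N HN].
    exists N. intros n Hn. rewrite sum_n_Reals. apply HN, Hn. }
  unfold eta. rewrite (is_series_unique _ _ Hseries). exact Hseries.
Qed.

Definition central_prob (n : nat) : R := central_binom n / 4 ^ n.

Lemma central_prob_0 : central_prob 0 = 1.
Proof. unfold central_prob, central_binom, Binomial.C. simpl. field. Qed.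

Lemma central_prob_S n :
  central_prob (S n) = central_prob n * (2 * INR n + 1) / (2 * INR n + 2).
Proof.
  unfold central_prob, central_binom, Binomial.C.
  replace (2 * S n - S n)%nat with (S n) by lia.
  replace (2 * n - n)%nat with n by lia.
  replace (2 * S n)%nat with (S (S (2 * n))) by lia.
  rewrite !fact_simpl, !mult_INR, !S_INR, mult_INR. simpl (INR 2).
  assert (H1 := INR_fact_neq_0 n). assert (H2 := INR_fact_neq_0 (2 * n)).
  assert (0 <= INR n) by apply pos_INR.
  simpl pow. field. repeat split; try lra. apply pow_nonzero; lra.
Qed.

Lemma central_prob_nonneg n : 0 <= central_prob n.
Proof.
  induction n as [|n IH]; [rewrite central_prob_0; lra |].
  rewrite central_prob_S. assert (0 <= INR n) by apply pos_INR.
  apply Rmult_le_pos; [apply Rmult_le_pos; lra | apply Rlt_le, Rinv_0_lt_compat; lra].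
Qed.

(* Wallis-type bound; the ratio (2n+1)(2n+3)/(2n+2)^2 of consecutive terms is < 1. *)
Lemma central_prob_sq_le n : central_prob n ^ 2 * (2 * INR n + 1) <= 1.
Proof.
  induction n as [|n IH]; [rewrite central_prob_0; simpl; lra |].
  rewrite central_prob_S, S_INR. assert (0 <= INR n) by apply pos_INR.
  set (c := central_prob n) in *.
  set (q := (2 * INR n + 1) * (2 * INR n + 3) / (2 * INR n + 2) ^ 2).
  assert (0 <= c ^ 2) by apply pow2_ge_0.
  replace ((c * (2 * INR n + 1) / (2 * INR n + 2)) ^ 2 * (2 * (INR n + 1) + 1))
    with (c ^ 2 * (2 * INR n + 1) * q) by (unfold q; field; lra).
  assert (Hq : 0 <= q <= 1).
  { unfold q. split.
    - apply Rmult_le_pos; [nra | apply Rlt_le, Rinv_0_lt_compat; nra].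
    - apply (Rmult_le_reg_r ((2 * INR n + 2) ^ 2)); [nra |].
      unfold Rdiv. rewrite Rmult_assoc, Rinv_l by nra. nra. }
  nra.
Qed.

Lemma is_lim_seq_central_prob : is_lim_seq central_prob 0.
Proof.
  assert (Hsq : is_lim_seq (fun n => central_prob n ^ 2) 0).
  { apply (is_lim_seq_le_le (fun _ => 0) _ (fun n => / INR (S n))).
    - intro n. split; [apply pow2_ge_0 |].
      assert (H := central_prob_sq_le n). rewrite S_INR.
      assert (0 <= INR n) by apply pos_INR. assert (0 <= central_prob n ^ 2) by apply pow2_ge_0.
      apply (Rmult_le_reg_r (INR n + 1)); [lra |]. rewrite Rinv_l by lra. nra.
    - apply is_lim_seq_const.
    - apply is_lim_seq_inv_INR_S. }
  assert (H := is_lim_seq_continuous sqrt _ 0 (continuity_pt_sqrt 0 (Rle_refl 0)) Hsq).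
  rewrite sqrt_0 in H. apply (is_lim_seq_ext _ _ _ (fun n => sqrt_pow2 _ (central_prob_nonneg n)) H).
Qed.

(* r_N(k) = C(2N, N-k) / C(2N, N) for k <= N, and 0 for k > N. *)
Fixpoint binom_ratio (N k : nat) : R :=
  match k with
  | O => 1
  | S k => binom_ratio N k * (INR N - INR k) / (INR N + INR k + 1)
  end.

Lemma binom_ratio_gt N k : (N < k)%nat -> binom_ratio N k = 0.
Proof.
  induction k as [|k IH]; intro Hk; [lia |].
  simpl. destruct (Nat.eq_dec N k) as [-> | Hne].
  - unfold Rminus. rewrite Rplus_opp_r. unfold Rdiv. ring.
  - rewrite IH by lia. unfold Rdiv. ring.
Qed.

Lemma binom_ratio_S_bounds N k : 0 <= binom_ratio N (S k) <= binom_ratio N k.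
Proof.
  induction k as [|k IH].
  - simpl. assert (0 <= INR N) by apply pos_INR.
    split; [apply Rmult_le_pos; [lra | apply Rlt_le, Rinv_0_lt_compat; lra] |].
    apply (Rmult_le_reg_r (INR N + 0 + 1)); [lra |].
    unfold Rdiv. rewrite Rmult_assoc, Rinv_l by lra. lra.
  - destruct (Nat.le_gt_cases (S k) N) as [Hk | Hk].
    + change (binom_ratio N (S (S k))) with
        (binom_ratio N (S k) * (INR N - INR (S k)) / (INR N + INR (S k) + 1)).
      apply le_INR in Hk. assert (0 <= INR (S k)) by apply pos_INR.
      destruct IH as [IH1 IH2]. split.
      * apply Rmult_le_pos; [apply Rmult_le_pos; lra | apply Rlt_le, Rinv_0_lt_compat; lra].
      * apply (Rmult_le_reg_r (INR N + INR (S k) + 1)); [lra |].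
        unfold Rdiv. rewrite Rmult_assoc, Rinv_l by lra. nra.
    + rewrite !binom_ratio_gt by lia. lra.
Qed.

Lemma binom_ratio_nonneg N k : 0 <= binom_ratio N k.
Proof. destruct k; [simpl; lra | apply binom_ratio_S_bounds]. Qed.

Lemma binom_ratio_S_S N k :
  binom_ratio (S N) (S k) =
  binom_ratio N k * (INR N + 1) ^ 2 / ((INR N + INR k + 1) * (INR N + INR k + 2)).
Proof.
  assert (0 <= INR N) by apply pos_INR.
  induction k as [|k IH].
  - cbn [binom_ratio]. rewrite S_INR. change (INR 0) with 0. field. lra.
  - assert (0 <= INR k) by apply pos_INR.
    change (binom_ratio (S N) (S (S k))) with
      (binom_ratio (S N) (S k) * (INR (S N) - INR (S k)) / (INR (S N) + INR (S k) + 1)).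
    rewrite IH. cbn [binom_ratio]. rewrite !S_INR. field. lra.
Qed.

Lemma binom_ratio_S_l N k :
  binom_ratio N k * (INR N + 1) ^ 2 = binom_ratio (S N) k * ((INR N + 1) ^ 2 - INR k ^ 2).
Proof.
  destruct k as [|k]; [simpl; ring |].
  rewrite binom_ratio_S_S. cbn [binom_ratio]. rewrite S_INR.
  assert (0 <= INR N) by apply pos_INR. assert (0 <= INR k) by apply pos_INR.
  field. lra.
Qed.

(* The alternating sum telescopes. *)
Lemma alt_sum_binom_ratio n : (1 <= n)%nat ->
  2 * sum_n_m (fun m => (-1) ^ S m * binom_ratio n m) 1 n = 1.
Proof.
  intro Hn. assert (1 <= INR n) by (apply (le_INR 1); exact Hn).
  set (D := fun m => binom_ratio n m * (INR n - INR m) / (2 * INR n)).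
  assert (HD : forall m, binom_ratio n (S m) = D m + D (S m)).
  { intro m. unfold D. cbn [binom_ratio]. rewrite S_INR.
    assert (0 <= INR m) by apply pos_INR. field. lra. }
  assert (Hpartial : forall M, @eq R (sum_n_m (fun m => (-1) ^ S m * binom_ratio n m) 1 M)
                                     (D 0%nat + (-1) ^ S M * D M)).
  { induction M as [|M IH].
    - rewrite sum_n_m_empty_R by lia. simpl. ring.
    - rewrite sum_n_Sm_R, IH, HD by lia. simpl. ring. }
  rewrite Hpartial. unfold D. cbn [binom_ratio]. unfold Rminus. rewrite Rplus_opp_r.
  change (INR 0) with 0. field. lra.
Qed.

Definition zeta_star2_alt (j n : nat) : R :=
  2 * sum_n_m (fun m => (-1) ^ S m * binom_ratio n m / INR m ^ (2 * j)) 1 n.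

Lemma zeta_star2_alt_step j :
  (forall n, (1 <= n)%nat -> zeta_star2 j n = zeta_star2_alt j n) ->
  forall n, zeta_star2 (S j) n = zeta_star2_alt (S j) n.
Proof.
  intros Hj n. unfold zeta_star2_alt. induction n as [|n IH].
  - cbn [zeta_star2]. rewrite !sum_n_m_empty_R by lia. ring.
  - change (zeta_star2 (S j) (S n)) with
      (sum_n_m (fun k => / INR k ^ 2 * zeta_star2 j k) 1 (S n)).
    rewrite sum_n_Sm_R by lia.
    change (sum_n_m (fun k => / INR k ^ 2 * zeta_star2 j k) 1 n) with (zeta_star2 (S j) n).
    rewrite IH, Hj by lia. unfold zeta_star2_alt.
    set (c := / INR (S n) ^ 2).
    set (f := fun m => (-1) ^ S m * binom_ratio n m / INR m ^ (2 * S j)).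
    transitivity (2 * (sum_n_m f 1 (S n) + c *
        sum_n_m (fun m => (-1) ^ S m * binom_ratio (S n) m / INR m ^ (2 * j)) 1 (S n))).
    { rewrite (sum_n_Sm_R f 1 n) by lia. unfold f. rewrite (binom_ratio_gt n (S n)) by lia.
      unfold Rdiv. ring. }
    f_equal. rewrite <- sum_n_m_scal_R, <- sum_n_m_plus_R. apply sum_n_m_ext_R.
    intros m Hm. unfold f, c.
    assert (1 <= INR m) by (apply (le_INR 1); lia).
    assert (0 <= INR n) by apply pos_INR.
    assert (INR m ^ (2 * j) <> 0) by (apply pow_nonzero; lra).
    replace (2 * S j)%nat with (2 * j + 2)%nat by lia. rewrite pow_add, S_INR.
    replace (binom_ratio n m) with
      (binom_ratio (S n) m * ((INR n + 1) ^ 2 - INR m ^ 2) / (INR n + 1) ^ 2)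
      by (rewrite <- binom_ratio_S_l; field; lra).
    field. repeat split; lra.
Qed.

Lemma zeta_star2_eq_alt j n : (1 <= n)%nat -> zeta_star2 j n = zeta_star2_alt j n.
Proof.
  revert n. induction j as [|j IH].
  - intros n Hn. simpl zeta_star2. rewrite <- (alt_sum_binom_ratio n Hn). unfold zeta_star2_alt.
    f_equal. apply sum_n_m_ext_R. intros. simpl. field.
  - intros n _. apply zeta_star2_alt_step, IH.
Qed.

(* [walk_prob N k] is p_N(k) = C(2N, N-k) / 4^N and [walk_defect N k] is d_N(k). *)
Definition walk_prob (N k : nat) : R := central_prob N * binom_ratio N k.

Definition walk_pair (N k : nat) : R := walk_prob N k + walk_prob N (S k).

Definition walk_sum (N k : nat) : R := sum_n_m (fun n => walk_prob n k / INR n) 1 N.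

Definition walk_defect (N k : nat) : R := / INR k - walk_sum N k.

Lemma walk_prob_S_0 N : walk_prob (S N) 0 = (walk_prob N 0 + walk_prob N 1) / 2.
Proof.
  unfold walk_prob. rewrite central_prob_S. cbn [binom_ratio]. change (INR 0) with 0.
  assert (0 <= INR N) by apply pos_INR. field. lra.
Qed.

Lemma walk_prob_S_S N k :
  walk_prob (S N) (S k) = (walk_prob N k + 2 * walk_prob N (S k) + walk_prob N (S (S k))) / 4.
Proof.
  unfold walk_prob. rewrite central_prob_S, binom_ratio_S_S. cbn [binom_ratio]. rewrite S_INR.
  assert (0 <= INR N) by apply pos_INR. assert (0 <= INR k) by apply pos_INR.
  field. lra.
Qed.

Lemma walk_prob_S_div N k :
  INR (S k) * walk_prob (S N) (S k) / INR (S N) = (walk_prob N k - walk_prob N (S (S k))) / 4.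
Proof.
  unfold walk_prob. rewrite central_prob_S, binom_ratio_S_S. cbn [binom_ratio].
  rewrite !S_INR. assert (0 <= INR N) by apply pos_INR. assert (0 <= INR k) by apply pos_INR.
  field. lra.
Qed.

Lemma walk_prob_nonneg N k : 0 <= walk_prob N k.
Proof. apply Rmult_le_pos; [apply central_prob_nonneg | apply binom_ratio_nonneg]. Qed.

Lemma walk_prob_decr N k : walk_prob N (S k) <= walk_prob N k.
Proof.
  apply Rmult_le_compat_l; [apply central_prob_nonneg | apply binom_ratio_S_bounds].
Qed.

Lemma walk_pair_nonneg N k : 0 <= walk_pair N k.
Proof. unfold walk_pair. generalize (walk_prob_nonneg N k) (walk_prob_nonneg N (S k)). lra. Qed.

Lemma walk_pair_decr N k : walk_pair N (S k) <= walk_pair N k.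
Proof. unfold walk_pair. generalize (walk_prob_decr N k) (walk_prob_decr N (S k)). lra. Qed.

Lemma sum_walk_pair_S N p :
  @eq R (sum_n_m (fun k => walk_pair (S N) k - walk_pair N k) 0 p)
        ((walk_prob N (S (S p)) - walk_prob N p) / 4).
Proof.
  induction p as [|p IH].
  - rewrite sum_n_n. unfold walk_pair. rewrite walk_prob_S_0, walk_prob_S_S. field.
  - rewrite sum_n_Sm_R, IH by lia. unfold walk_pair. rewrite !walk_prob_S_S. field.
Qed.

Lemma walk_defect_eq N p :
  @eq R (INR (S p) * walk_defect N (S p)) (sum_n_m (walk_pair N) 0 p).
Proof.
  unfold walk_defect. revert p. induction N as [|N IH]; intro p.
  - unfold walk_sum. rewrite sum_n_m_empty_R by lia.
    transitivity 1; [rewrite Rminus_0_r; apply Rinv_r, not_0_INR; lia |].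
    induction p as [|p IHp].
    + rewrite sum_n_n. unfold walk_pair, walk_prob. rewrite central_prob_0.
      cbn [binom_ratio]. change (INR 0) with 0. field.
    + rewrite sum_n_Sm_R, <- IHp by lia. unfold walk_pair, walk_prob.
      rewrite !(binom_ratio_gt 0) by lia. ring.
  - unfold walk_sum. rewrite sum_n_Sm_R by lia. fold (walk_sum N (S p)).
    transitivity (INR (S p) * (/ INR (S p) - walk_sum N (S p))
                  - INR (S p) * walk_prob (S N) (S p) / INR (S N)).
    { field. split; apply not_0_INR; lia. }
    rewrite IH, walk_prob_S_div.
    assert (H := sum_n_m_minus_R (walk_pair (S N)) (walk_pair N) 0 p).
    rewrite sum_walk_pair_S in H. unfold walk_pair at 1 in H. unfold walk_pair at 2. lra.
Qed.

Lemma walk_defect_S N p : walk_defect N (S p) = sum_n_m (walk_pair N) 0 p / INR (S p).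
Proof. rewrite <- walk_defect_eq. field. apply not_0_INR. lia. Qed.

Lemma walk_defect_nonneg N p : 0 <= walk_defect N (S p).
Proof.
  rewrite walk_defect_S. apply Rmult_le_pos.
  - apply sum_n_m_nonneg_R, walk_pair_nonneg.
  - apply Rlt_le, Rinv_0_lt_compat, lt_0_INR. lia.
Qed.

(* An average of a decreasing sequence decreases. *)
Lemma walk_defect_decr N p : walk_defect N (S (S p)) <= walk_defect N (S p).
Proof.
  rewrite !walk_defect_S, sum_n_Sm_R by lia.
  assert (H1 := sum_n_m_decr_ge_last (walk_pair N) (walk_pair_decr N) p).
  assert (H2 := walk_pair_decr N p).
  set (s := sum_n_m (walk_pair N) 0 p) in *.
  rewrite (S_INR (S p)). rewrite S_INR in *. assert (0 <= INR p) by apply pos_INR.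
  apply (Rmult_le_reg_r ((INR p + 1) * (INR p + 1 + 1))); [nra |].
  replace ((s + walk_pair N (S p)) / (INR p + 1 + 1) * ((INR p + 1) * (INR p + 1 + 1)))
    with ((s + walk_pair N (S p)) * (INR p + 1)) by (field; lra).
  replace (s / (INR p + 1) * ((INR p + 1) * (INR p + 1 + 1)))
    with (s * (INR p + 1 + 1)) by (field; lra).
  nra.
Qed.

Lemma walk_defect_1_le N : walk_defect N 1 <= 2 * central_prob N.
Proof.
  rewrite walk_defect_S, sum_n_n. unfold walk_pair, walk_prob. cbn [binom_ratio].
  change (INR 0) with 0. simpl (INR 1).
  assert (0 <= INR N) by apply pos_INR. assert (Hc := central_prob_nonneg N).
  assert (0 <= 1 / (INR N + 1)).
  { apply Rmult_le_pos; [lra | apply Rlt_le, Rinv_0_lt_compat; lra]. }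
  replace ((central_prob N * 1 + central_prob N * (1 * (INR N - 0) / (INR N + 0 + 1))) / 1)
    with (central_prob N * (2 - 1 / (INR N + 1))) by (field; lra).
  nra.
Qed.

Lemma walk_sum_gt N : walk_sum N (S N) = 0.
Proof.
  apply sum_n_m_zero_R. intros n Hn. unfold walk_prob.
  rewrite binom_ratio_gt by lia. unfold Rdiv. ring.
Qed.

Lemma sum_zeta_star2_walk_sum j N :
  @eq R (sum_n_m (fun n => central_prob n / INR n * zeta_star2 j n) 1 N)
        (2 * sum_n_m (fun m => (-1) ^ S m * walk_sum N m / INR m ^ (2 * j)) 1 N).
Proof.
  induction N as [|N IH].
  - rewrite !sum_n_m_empty_R by lia. ring.
  - rewrite sum_n_Sm_R, IH, zeta_star2_eq_alt by lia. unfold zeta_star2_alt.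
    set (f := fun m => (-1) ^ S m * walk_sum N m / INR m ^ (2 * j)).
    transitivity (2 * (sum_n_m f 1 (S N) + central_prob (S N) / INR (S N) *
        sum_n_m (fun m => (-1) ^ S m * binom_ratio (S N) m / INR m ^ (2 * j)) 1 (S N))).
    { rewrite (sum_n_Sm_R f 1 N) by lia.
      replace (f (S N)) with 0 by (unfold f; rewrite walk_sum_gt; unfold Rdiv; ring).
      match goal with |- ?x = ?y => change (@eq R x y) end. ring. }
    f_equal. rewrite <- sum_n_m_scal_R, <- sum_n_m_plus_R. apply sum_n_m_ext_R.
    intros m Hm. unfold f, walk_sum. rewrite (sum_n_Sm_R _ 1 N) by lia.
    unfold walk_prob, Rdiv. ring.
Qed.

Definition alt_defect_sum (j L : nat) : R :=
  sum_n_m (fun i => (-1) ^ i * (walk_defect (S L) (S i) / INR (S i) ^ (2 * j))) 0 L.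

Lemma alt_defect_sum_bounds j L : 0 <= alt_defect_sum j L <= 2 * central_prob (S L).
Proof.
  assert (Hpow : forall i, 0 < INR (S i) ^ (2 * j)) by (intro; apply pow_lt, lt_0_INR; lia).
  assert (Hb : 0 <= alt_defect_sum j L <= walk_defect (S L) 1 / INR 1 ^ (2 * j)).
  { apply alternating_sum_bounds.
    - intro i. apply Rmult_le_pos; [apply walk_defect_nonneg |].
      apply Rlt_le, Rinv_0_lt_compat, Hpow.
    - intro i. unfold Rdiv.
      apply Rle_trans with (walk_defect (S L) (S i) * / INR (S (S i)) ^ (2 * j)).
      + apply Rmult_le_compat_r; [apply Rlt_le, Rinv_0_lt_compat, Hpow |].
        apply walk_defect_decr.
      + apply Rmult_le_compat_l; [apply walk_defect_nonneg | apply inv_pow_INR_S_decr]. }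
  simpl (INR 1) in Hb. rewrite pow1, Rdiv_1_r in Hb.
  generalize (walk_defect_1_le (S L)). lra.
Qed.

Lemma partial_sum_decomp j L :
  sum_n (fun m => central_binom (m + 1) / (INR (m + 1) * 4 ^ (m + 1)) * zeta_star2 j (m + 1)) L
  = 2 * sum_n (fun m => (-1) ^ m / INR (m + 1) ^ (2 * j + 1)) L - 2 * alt_defect_sum j L.
Proof.
  unfold sum_n, alt_defect_sum.
  rewrite (sum_n_m_ext_R _ (fun m => (fun n => central_prob n / INR n * zeta_star2 j n) (S m)))
    by (intros k _; rewrite Nat.add_1_r; unfold central_prob; field;
        split; [apply pow_nonzero; lra | apply not_0_INR; lia]).
  rewrite (sum_n_m_S_R (fun n => central_prob n / INR n * zeta_star2 j n)).
  rewrite sum_zeta_star2_walk_sum.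
  rewrite <- (sum_n_m_S_R (fun m => (-1) ^ S m * walk_sum (S L) m / INR m ^ (2 * j))).
  rewrite <- Rmult_minus_distr_l, <- sum_n_m_minus_R. f_equal.
  apply sum_n_m_ext_R. intros i _. unfold walk_defect.
  rewrite Nat.add_1_r, pow_add, pow_1.
  assert (INR (S i) <> 0) by (apply not_0_INR; lia).
  assert (INR (S i) ^ (2 * j) <> 0) by (apply pow_nonzero; auto).
  simpl pow at 1 3. field. auto.
Qed.

Lemma is_lim_seq_alt_defect_sum j : is_lim_seq (alt_defect_sum j) 0.
Proof.
  apply (is_lim_seq_le_le (fun _ => 0) _ (fun L => 2 * central_prob (S L))).
  - apply alt_defect_sum_bounds.
  - apply is_lim_seq_const.
  - replace (Finite 0) with (Finite (2 * 0)) by (f_equal; ring).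
    apply is_lim_seq_mult'; [apply is_lim_seq_const |].
    apply (is_lim_seq_incr_1 central_prob), is_lim_seq_central_prob.
Qed.

Theorem mainTheorem12 (j : nat) :
  is_series
    (fun m : nat =>
       central_binom (m + 1) / (INR (m + 1) * 4 ^ (m + 1))
       * zeta_star2 j (m + 1))
    (2 * eta (2 * j + 1)).
Proof.
  assert (Heta := is_series_eta (2 * j + 1) ltac:(lia)).
  assert (Hdefect := is_lim_seq_alt_defect_sum j).
  apply (is_lim_seq_ext (fun L => 2 * sum_n (fun m => (-1) ^ m / INR (m + 1) ^ (2 * j + 1)) L
                                  - 2 * alt_defect_sum j L) _ (2 * eta (2 * j + 1))).
  { intro L. symmetry. apply partial_sum_decomp. }
  replace (2 * eta (2 * j + 1)) with (2 * eta (2 * j + 1) - 2 * 0) by ring.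
  apply is_lim_seq_minus'; apply is_lim_seq_mult'; auto using is_lim_seq_const.
Qed.
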